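(* Let $\mathcal{M}=(X,\tau,\Phi,V)$ be a topo-model, $\theta\in\Phi$ and $\varphi,\psi\in\mathcal{L}_{APAL_{int}}$. Then (1) $[\![\psi]\!]^{\theta^\varphi}=[\![\langle\varphi\rangle\psi]\!]^\theta$; (2) $\theta^\varphi=\theta^{\mathrm{int}(\varphi)}$; (3) $(\theta^\varphi)^\psi=\theta^{\langle\varphi\rangle\mathrm{int}(\psi)}$ (as partial functions).
   Context: Fix a countable set $\mathit{Prop}$ and a finite non-empty set $\mathcal{A}$ of agents. $\mathcal{L}_{APAL_{int}}$: $\varphi ::= p \mid \neg\varphi \mid \varphi\wedge\varphi \mid K_i\varphi \mid \mathrm{int}(\varphi)\mid [\varphi]\varphi\mid\Box\varphi$; $\mathcal{L}_{PAL_{int}}$ is the $\Box$-free fragment; $\langle\varphi\rangle\psi:=\neg[\varphi]\neg\psi$. Topo-model $(X,\tau,\Phi,V)$: $(X,\tau)$ topological space with interior operator $\mathrm{Int}$; $V(p)\subseteq X$; $\Phi$ a set of partial functions $\theta$ from $X$ to functions $\mathcal{A}\to\tau$ such that for all $x,y\in Dom(\theta)$, $i$, $U\in\tau$: $\theta(x)(i)\in\tau$; $x\in\theta(x)(i)$; $\theta(x)(i)\subseteq Dom(\theta)$; $y\in\theta(x)(i)\Rightarrow\theta(x)(i)=\theta(y)(i)$; $\theta|_U\in\Phi$ (domain $Dom(\theta)\cap U$, values $\theta|_U(x)(i)=\theta(x)(i)\cap U$). Semantics at $(x,\theta)$ with $x\in Dom(\theta)$: $p$ iff $x\in V(p)$;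 Booleans usual; $K_i\varphi$ iff $\varphi$ holds at $(y,\theta)$ for all $y\in\theta(x)(i)$; $\mathrm{int}(\varphi)$ iff $x\in\mathrm{Int}([\![\varphi]\!]^\theta)$ where $[\![\varphi]\!]^\theta=\{y\in Dom(\theta)\mid(y,\theta)\models\varphi\}$; $[\varphi]\psi$ iff $(x,\theta)\models\mathrm{int}(\varphi)$ implies $(x,\theta^\varphi)\models\psi$; $\Box\varphi$ iff $(x,\theta)\models[\psi]\varphi$ for all $\psi\in\mathcal{L}_{PAL_{int}}$. Here the updated function $\theta^\varphi$ is the partial function with $Dom(\theta^\varphi)=\mathrm{Int}([\![\varphi]\!]^\theta)$ and $\theta^\varphi(x)(i)=\theta(x)(i)\cap\mathrm{Int}([\![\varphi]\!]^\theta)$. *)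

From HB Require Import structures.
From mathcomp Require Import all_boot all_order.
From mathcomp Require Import boolp classical_sets functions topology.
Set Implicit Arguments. Unset Strict Implicit. Unset Printing Implicit Defensive.
Local Open Scope classical_set_scope.

Inductive form (Atom Agent : Type) : Type :=
| Atm : Atom -> form Atom Agent
| Neg : form Atom Agent -> form Atom Agent
| And : form Atom Agent -> form Atom Agent -> form Atom Agent
| Kn  : Agent -> form Atom Agent -> form Atom Agent
| Intf : form Atom Agent -> form Atom Agent
| Ann : form Atom Agent -> form Atom Agent -> form Atom Agent
| Box : form Atom Agent -> form Atom Agent.
Arguments Atm {Atom Agent}. Arguments Neg {Atom Agent}. Arguments And {Atom Agent}.
Arguments Kn {Atom Agent}. Arguments Intf {Atom Agent}. Arguments Ann {Atom Agent}.
Arguments Box {Atom Agent}.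

Definition Dia {Atom Agent} (phi psi : form Atom Agent) : form Atom Agent :=
  Neg (Ann phi (Neg psi)).

Fixpoint box_free {Atom Agent} (phi : form Atom Agent) : Prop :=
  match phi with
  | Atm _ => True
  | Neg a => box_free a
  | And a b => box_free a /\ box_free b
  | Kn _ a => box_free a
  | Intf a => box_free a
  | Ann a b => box_free a /\ box_free b
  | Box _ => False
  end.

Section Model.
Variables (X : topologicalType) (Agent : Type).

Definition pfun := X -> option (Agent -> set X).

Definition Dom (th : pfun) : set X := [set x | th x <> None].

Definition restr (th : pfun) (U : set X) : pfun :=
  fun x => if pselect (U x) then
             match th x with
             | Some f => Some (fun i => f i `&` U)
             | None => None
             end
           else None.

End Model.

Record topo_model (Atom Agent : Type) := TopoModel {
  tm_X : topologicalType;
  tm_V : Atom -> set tm_X;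
  tm_Phi : set (pfun tm_X Agent);
  tm_open : forall th, tm_Phi th -> forall x f, th x = Some f -> forall i, open (f i);
  tm_refl : forall th, tm_Phi th -> forall x f, th x = Some f -> forall i, f i x;
  tm_dom : forall th, tm_Phi th -> forall x f, th x = Some f -> forall i, f i `<=` Dom th;
  tm_part : forall th, tm_Phi th -> forall x y f g, th x = Some f -> th y = Some g ->
              forall i, f i y -> f i = g i;
  tm_restr : forall th, tm_Phi th -> forall U : set tm_X, open U -> tm_Phi (restr th U)
}.
Arguments tm_X {Atom Agent}. Arguments tm_V {Atom Agent}. Arguments tm_Phi {Atom Agent}.

Section Semantics.
Variables (Atom Agent : Type) (M : topo_model Atom Agent).
Local Notation X := (tm_X M).
Local Notation pf := (pfun X Agent).

(* theta^phi given the extension E = [[phi]]^theta : restriction to Int(E).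
   Since E is contained in Dom theta, this has domain Int(E) and values
   theta(x)(i) \cap Int(E), as in the paper. *)
Definition upd_set (th : pf) (E : set X) : pf := restr th (interior E).

(* Auxiliary semantics, only used for Box-free formulas (Box case unused). *)
Fixpoint sat0 (phi : form Atom Agent) (th : pf) (x : X) {struct phi} : Prop :=
  match phi with
  | Atm p => tm_V M p x
  | Neg a => ~ sat0 a th x
  | And a b => sat0 a th x /\ sat0 b th x
  | Kn i a => match th x with Some f => forall y, f i y -> sat0 a th y | None => True end
  | Intf a => interior [set y | th y <> None /\ sat0 a th y] x
  | Ann a b => interior [set y | th y <> None /\ sat0 a th y] x ->
               sat0 b (upd_set th [set y | th y <> None /\ sat0 a th y]) x
  | Box _ => False
  end.

Definition ext0 (phi : form Atom Agent) (th : pf) : set X :=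
  [set y | Dom th y /\ sat0 phi th y].

(* The semantics of L_{APAL_int}; Box quantifies over Box-free formulas,
   whose extensions are given by sat0 (which agrees with sat on them). *)
Fixpoint sat (phi : form Atom Agent) (th : pf) (x : X) {struct phi} : Prop :=
  match phi with
  | Atm p => tm_V M p x
  | Neg a => ~ sat a th x
  | And a b => sat a th x /\ sat b th x
  | Kn i a => match th x with Some f => forall y, f i y -> sat a th y | None => True end
  | Intf a => interior [set y | th y <> None /\ sat a th y] x
  | Ann a b => interior [set y | th y <> None /\ sat a th y] x ->
               sat b (upd_set th [set y | th y <> None /\ sat a th y]) x
  | Box a => forall psi, box_free psi ->
               interior (ext0 psi th) x -> sat a (upd_set th (ext0 psi th)) x
  end.

Definition ext (phi : form Atom Agent) (th : pf) : set X :=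
  [set y | Dom th y /\ sat phi th y].

Definition upd (th : pf) (phi : form Atom Agent) : pf := upd_set th (ext phi th).

End Semantics.
Arguments sat0 {Atom Agent} M phi th x. Arguments ext0 {Atom Agent} M phi th.
Arguments sat {Atom Agent} M phi th x. Arguments ext {Atom Agent} M phi th.
Arguments upd {Atom Agent} M th phi. Arguments upd_set {Atom Agent} M th E.

(* Since [[phi]] lies in Dom theta, theta^phi is the restriction of theta to the
   open set Int [[phi]], whose domain is exactly that set. Then (1) is the
   semantic clause of <phi>psi, (2) holds because [[int phi]] = Int [[phi]] and
   Int is idempotent, and (3) holds because restricting twice, to a smaller
   set the second time, is restricting once, while by (1) the extension of
   <phi>int psi is Int [[psi]]^(theta^phi). *)

From mathcomp Require Import all_boot all_order.
From mathcomp Require Import boolp classical_sets functions topology.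
Local Open Scope classical_set_scope.

Lemma interior_interior (T : topologicalType) (A : set T) :
  interior (interior A) = interior A.
Proof. exact/interior_id/open_interior. Qed.

Section Restriction.
Variables (T : topologicalType) (Agent : Type).
Implicit Types (th : pfun T Agent) (U V : set T).

Lemma Dom_restr th U : U `<=` Dom th -> Dom (restr th U) = U.
Proof.
move=> UD; apply/seteqP; split => y; rewrite /Dom /restr /=.
  by case: pselect.
move=> Uy; case: pselect => // ?.
by move: (UD y Uy); rewrite /Dom /=; case: (th y).
Qed.

Lemma restr_restr th U V : V `<=` U -> restr (restr th U) V = restr th V.
Proof.
move=> VU; apply: funext => y; rewrite /restr.
case: pselect => // Vy; case: pselect => [Uy|/(_ (VU y Vy))] //.
case: (th y) => //= f; congr Some; apply: funext => i.
by rewrite -setIA (setIidr VU).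
Qed.

End Restriction.

Section UpdateProperties.
Variables (Atom Agent : Type) (M : topo_model Atom Agent).
Implicit Types (th : pfun (tm_X M) Agent) (phi psi : form Atom Agent).

Lemma interior_ext_Dom th phi : interior (ext M phi th) `<=` Dom th.
Proof. by move=> y /interior_subset []. Qed.

Lemma Dom_upd th phi : Dom (upd M th phi) = interior (ext M phi th).
Proof. exact/Dom_restr/interior_ext_Dom. Qed.

Lemma ext_upd th phi psi : ext M psi (upd M th phi) = ext M (Dia phi psi) th.
Proof.
rewrite {1}/ext Dom_upd; apply/seteqP; split => y /=.
  by move=> [Iy Sy]; split=> [|/(_ Iy)//]; exact: interior_ext_Dom Iy.
move=> [_ nS]; have Iy : interior (ext M phi th) y.
  by apply: contrapT => nIy; apply: nS => /nIy.
by split=> //; apply: contrapT => nSy; apply: nS.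
Qed.

Lemma ext_Intf th phi : ext M (Intf phi) th = interior (ext M phi th).
Proof.
apply/seteqP; split => y /=; first by case.
by move=> Iy; split=> //; exact: interior_ext_Dom Iy.
Qed.

Lemma upd_Intf th phi : upd M th (Intf phi) = upd M th phi.
Proof. by rewrite /upd /upd_set ext_Intf interior_interior. Qed.

Lemma upd_upd th phi psi :
  upd M (upd M th phi) psi = upd M th (Dia phi (Intf psi)).
Proof.
have sub : interior (ext M psi (upd M th phi)) `<=` interior (ext M phi th).
  by rewrite -(Dom_upd th phi); exact: interior_ext_Dom.
rewrite [RHS]/upd /upd_set -ext_upd ext_Intf interior_interior.
exact: restr_restr sub.
Qed.

End UpdateProperties.

Theorem mainTheorem10 (Atom : countType) (Agent : finType) (Hag : (0 < #|Agent|)%N)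
  (M : topo_model Atom Agent) (th : pfun (tm_X M) Agent) (Hth : tm_Phi M th)
  (phi psi : form Atom Agent) :
  ext M psi (upd M th phi) = ext M (Dia phi psi) th /\
  upd M th phi = upd M th (Intf phi) /\
  upd M (upd M th phi) psi = upd M th (Dia phi (Intf psi)).
Proof.
split; first exact: ext_upd.
by split; [rewrite upd_Intf | exact: upd_upd].
Qed.
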